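(* Let $N\in\mathbb{N}$, $N\geqslant 2$, let $v:[0,1]\to\mathbb{R}$ be continuous and let $f:[0,1]\times\mathbb{R}\to\mathbb{R}$ satisfy: (C(c)) $f$ is continuous on $[0,1]\times\mathbb{R}$ and has a continuous partial derivative $f_x$ with respect to the second variable on $[0,1]\times\mathbb{R}$; (D(f)) there exist positive constants $A,B$ with $A<1$ such that $|f(t,x)|\leqslant A|x|+B$ for all $t\in[0,1]$, $x\in\mathbb{R}$; (D($f_x$)) $\inf_{(t,x)\in[0,1]\times\mathbb{R}} f_x(t,x)>-1$. Then the discrete problem $$\Delta^2x(k-1)=\tfrac{1}{N^2}f\left(\tfrac{k}{N},x(k)\right)+\tfrac{1}{N^2}v\left(\tfrac{k}{N}\right),\ k\in\{1,\dots,N-1\},\qquad x(0)=x(N)=0,$$ has a unique solution $x:\{0,1,\dots,N\}\to\mathbb{R}$.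
   Context: $\Delta x(k-1)=x(k)-x(k-1)$, so $\Delta^2x(k-1)=x(k+1)-2x(k)+x(k-1)$. *)

From Stdlib Require Import Reals.
Open Scope R_scope.

Definition cont_on_strip (g : R -> R -> R) : Prop :=
  forall t x, 0 <= t <= 1 ->
    forall eps, 0 < eps -> exists delta, 0 < delta /\
      forall s y, 0 <= s <= 1 -> Rabs (s - t) < delta -> Rabs (y - x) < delta ->
        Rabs (g s y - g t x) < eps.

(* Second difference: Delta^2 x (k-1) = x(k+1) - 2 x(k) + x(k-1). *)
Definition delta2 (x : nat -> R) (k : nat) : R :=
  x (S k) - 2 * x k + x (pred k).

Definition is_solution (N : nat) (f : R -> R -> R) (v : R -> R) (x : nat -> R) : Prop :=
  x 0%nat = 0 /\ x N = 0 /\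
  forall k : nat, (1 <= k <= N - 1)%nat ->
    delta2 x k = / (INR N)^2 * f (INR k / INR N) (x k)
                 + / (INR N)^2 * v (INR k / INR N).

From Stdlib Require Import Reals Lra Lia Psatz.
Open Scope R_scope.

(* For w with w(0) = w(N) = 0, summation by parts gives
   sum_(k<N) Delta^2 w(k-1) w(k) = -E(w), with E(w) = sum_(k<N) (w(k+1) - w(k))^2,
   and the discrete Poincare inequality w(k)^2 <= k E(w) bounds sum_k w(k)^2 by N^2 E(w).
   Hence a lower bound N^2 Delta^2 w(k-1) w(k) >= -(A w(k)^2 + K |w(k)|) with A < 1
   forces (1 - A) |w(k)| <= K.  For the difference of two solutions this holds with
   K = 0 and A = max(-inf f_x, 0), which gives uniqueness.  Existence is by shooting:
   the solution of the initial value problem x(0) = 0, x(1) = s is continuous in s,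
   x(N) is injective in s by uniqueness, and the estimate applied to x minus its
   linear interpolation gives (1 - A) |s| <= |x(N)| + K; a continuous injective map
   of R with this growth has a zero. *)

Fixpoint sum_lt (g : nat -> R) (n : nat) : R :=
  match n with O => 0 | S n => sum_lt g n + g n end.

Lemma sum_lt_le g h n :
  (forall k, (k < n)%nat -> g k <= h k) -> sum_lt g n <= sum_lt h n.
Proof.
  induction n as [|n IH]; simpl; intros Hgh; [lra|].
  assert (g n <= h n) by (apply Hgh; lia).
  assert (sum_lt g n <= sum_lt h n) by (apply IH; intros; apply Hgh; lia).
  lra.
Qed.

Lemma sum_lt_affine a b g n :
  sum_lt (fun k => a * g k + b) n = a * sum_lt g n + INR n * b.
Proof.
  induction n as [|n IH]; simpl sum_lt; [simpl; ring|].
  rewrite IH, S_INR; ring.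
Qed.

Definition energy (w : nat -> R) (n : nat) : R :=
  sum_lt (fun k => (w (S k) - w k) ^ 2) n.

Lemma energy_S w n : energy w (S n) = energy w n + (w (S n) - w n) ^ 2.
Proof. reflexivity. Qed.

Lemma energy_le w m n : (m <= n)%nat -> energy w m <= energy w n.
Proof.
  induction 1 as [|n _ IH]; [lra|].
  rewrite energy_S. pose proof (pow2_ge_0 (w (S n) - w n)). lra.
Qed.

Lemma energy_ge0 w n : 0 <= energy w n.
Proof. exact (energy_le w 0 n (Nat.le_0_l n)). Qed.

Lemma sum_delta2_mul_energy w n :
  sum_lt (fun k => delta2 w k * w k) n + energy w n = (w n - w (pred n)) * w n.
Proof.
  induction n as [|n IH]; [unfold energy; cbn; ring|].
  rewrite energy_S; simpl sum_lt. unfold delta2 in *; cbn [pred]. lra.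
Qed.

Lemma sq_le_energy w k : w 0%nat = 0 -> w k ^ 2 <= INR k * energy w k.
Proof.
  intros H0; induction k as [|k IH]; [rewrite H0; simpl; lra|].
  rewrite energy_S, S_INR.
  pose proof (energy_ge0 w k).
  destruct k as [|k].
  - rewrite H0; simpl. nra.
  - assert (Hk : 0 < INR (S k)) by (apply lt_0_INR; lia).
    apply Rmult_le_reg_l with (INR (S k)); [exact Hk|].
    pose proof (pow2_ge_0 (w (S k) - INR (S k) * (w (S (S k)) - w (S k)))).
    nra.
Qed.

Lemma sum_sq_le_energy w n :
  w 0%nat = 0 -> sum_lt (fun k => w k ^ 2) n <= INR n ^ 2 * energy w n.
Proof.
  intros H0.
  apply Rle_trans with (sum_lt (fun k => 0 * w k + INR n * energy w n) n).
  - apply sum_lt_le; intros k Hk.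
    pose proof (sq_le_energy w k H0).
    pose proof (le_INR k n ltac:(lia)). pose proof (pos_INR k).
    pose proof (energy_le w k n ltac:(lia)). pose proof (energy_ge0 w k).
    nra.
  - rewrite sum_lt_affine. right; ring.
Qed.

Lemma dirichlet_energy_bound N w A K :
  (1 <= N)%nat -> w 0%nat = 0 -> w N = 0 -> 0 <= A < 1 ->
  (forall k, (1 <= k <= N - 1)%nat ->
     - (A * w k ^ 2 + K * Rabs (w k)) <= INR N ^ 2 * (delta2 w k * w k)) ->
  (1 - A) ^ 2 * (INR N * energy w N) <= K ^ 2.
Proof.
  intros HN H0 HN0 HA Hw.
  assert (HNpos : 0 < INR N) by (apply lt_0_INR; lia).
  (* Young: 2 (1 - A) K |q| <= (1 - A)^2 q^2 + K^2 *)
  assert (Hterm : forall k, (k < N)%nat ->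
    - (1 - A ^ 2) * w k ^ 2 + - K ^ 2 <= 2 * (1 - A) * INR N ^ 2 * (delta2 w k * w k) + 0).
  { intros k Hk. destruct k as [|k].
    - rewrite H0. pose proof (pow2_ge_0 K). nra.
    - pose proof (Hw (S k) ltac:(lia)) as Hk'.
      pose proof (pow2_ge_0 ((1 - A) * Rabs (w (S k)) - K)).
      rewrite <- (pow2_abs (w (S k))) in *. nra. }
  pose proof (sum_lt_le _ _ N Hterm) as Hsum. rewrite !sum_lt_affine in Hsum.
  pose proof (sum_delta2_mul_energy w N) as Hparts. rewrite HN0, Rmult_0_r in Hparts.
  pose proof (sum_sq_le_energy w N H0) as Hpoinc.
  pose proof (energy_ge0 w N).
  assert (Hsq : (1 - A ^ 2) * sum_lt (fun k => w k ^ 2) N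
                <= (1 - A ^ 2) * (INR N ^ 2 * energy w N))
    by (apply Rmult_le_compat_l; nra).
  apply Rmult_le_reg_l with (INR N); [exact HNpos|]. nra.
Qed.

Lemma dirichlet_abs_bound N w A K :
  (1 <= N)%nat -> w 0%nat = 0 -> w N = 0 -> 0 <= A < 1 -> 0 <= K ->
  (forall k, (1 <= k <= N - 1)%nat ->
     - (A * w k ^ 2 + K * Rabs (w k)) <= INR N ^ 2 * (delta2 w k * w k)) ->
  forall k, (k <= N)%nat -> (1 - A) * Rabs (w k) <= K.
Proof.
  intros HN H0 HN0 HA HK Hw k Hk.
  pose proof (dirichlet_energy_bound N w A K HN H0 HN0 HA Hw) as Hsum.
  pose proof (sq_le_energy w k H0) as Hk2. rewrite <- pow2_abs in Hk2.
  pose proof (le_INR k N Hk). pose proof (pos_INR k).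
  pose proof (energy_le w k N Hk). pose proof (energy_ge0 w k).
  assert (Hsq : ((1 - A) * Rabs (w k)) ^ 2 <= K ^ 2).
  { apply Rle_trans with ((1 - A) ^ 2 * (INR N * energy w N)); [|exact Hsum].
    rewrite Rpow_mult_distr. apply Rmult_le_compat_l; [nra|]. nra. }
  pose proof (Rabs_pos (w k)). nra.
Qed.

Lemma continuity_injective_no_interior_min g q r p :
  continuity g -> (forall a b, g a = g b -> a = b) -> q < r < p ->
  g r < g q -> g r < g p -> False.
Proof.
  intros Hc Hinj Hr Hq Hp.
  set (y := (g r + Rmin (g q) (g p)) / 2).
  pose proof (Rmin_l (g q) (g p)). pose proof (Rmin_r (g q) (g p)).
  pose proof (Rmin_glb_lt _ _ _ Hq Hp).
  assert (Hcy : continuity (fun x => g x - y)).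
  { apply continuity_minus; [exact Hc|]. apply continuity_const; intros ? ?; reflexivity. }
  destruct (IVT_cor _ q r Hcy) as [z1 [Hz1 E1]]; [lra | unfold y; nra |].
  destruct (IVT_cor _ r p Hcy) as [z2 [Hz2 E2]]; [lra | unfold y; nra |].
  assert (z1 = z2) by (apply Hinj; lra). subst z2.
  assert (z1 = r) by lra. subst z1. unfold y in E1. lra.
Qed.

(* Either g changes sign on [-p, p], or g(0) is an interior extremum. *)
Lemma continuity_injective_root g c b :
  continuity g -> (forall a b, g a = g b -> a = b) -> 0 < c ->
  (forall s, c * Rabs s <= Rabs (g s) + b) -> exists s, g s = 0.
Proof.
  intros Hc Hinj Hc0 Hgrow.
  set (p := (Rabs (g 0) + b) / c + 1).
  assert (Hp : 1 <= p).
  { pose proof (Hgrow 0) as Hg0. rewrite Rabs_R0, Rmult_0_r in Hg0.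
    assert (0 <= (Rabs (g 0) + b) / c)
      by (apply Rmult_le_pos; [lra | left; apply Rinv_0_lt_compat, Hc0]).
    unfold p; lra. }
  assert (Hfar : forall s, Rabs s = p -> Rabs (g 0) < Rabs (g s)).
  { intros s Hs. pose proof (Hgrow s) as Hg. rewrite Hs in Hg.
    replace (c * p) with (Rabs (g 0) + b + c) in Hg by (unfold p; field; lra). lra. }
  pose proof (Hfar p ltac:(apply Rabs_pos_eq; lra)) as Hgp.
  pose proof (Hfar (- p) ltac:(rewrite Rabs_Ropp; apply Rabs_pos_eq; lra)) as Hgq.
  destruct (Rle_dec (g (- p) * g p) 0) as [Hsign|Hsign].
  - destruct (IVT_cor g (- p) p Hc) as [s [_ Hs]]; [lra | exact Hsign |].
    exists s; exact Hs.
  - exfalso. apply Rnot_le_lt in Hsign.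
    pose proof (Rle_abs (g 0)). pose proof (Rle_abs (- g 0)).
    rewrite Rabs_Ropp in *.
    destruct (Rlt_le_dec 0 (g p)) as [Hpos|Hneg].
    + assert (0 < g (- p)) by nra.
      rewrite (Rabs_pos_eq (g p)) in Hgp by lra.
      rewrite (Rabs_pos_eq (g (- p))) in Hgq by lra.
      apply (continuity_injective_no_interior_min g (- p) 0 p); auto; lra.
    + assert (g (- p) < 0) by nra. assert (g p < 0) by nra.
      rewrite (Rabs_left (g p)) in Hgp by lra.
      rewrite (Rabs_left (g (- p))) in Hgq by lra.
      apply (continuity_injective_no_interior_min (fun x => - g x) (- p) 0 p).
      * exact (continuity_opp g Hc).
      * intros a a' E. apply Hinj. lra.
      * lra.
      * lra.
      * lra.
Qed.

Section Shooting.
Variable F : nat -> R -> R.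

Fixpoint shoot_pair (s : R) (k : nat) : R * R :=
  match k with
  | O => (0, s)
  | S k => let p := shoot_pair s k in (snd p, 2 * snd p - fst p + F (S k) (snd p))
  end.

Definition shoot (s : R) (k : nat) : R := fst (shoot_pair s k).

Lemma shoot_1 s : shoot s 1 = s.
Proof. reflexivity. Qed.

Lemma shoot_SS s k :
  shoot s (S (S k)) = 2 * shoot s (S k) - shoot s k + F (S k) (shoot s (S k)).
Proof. reflexivity. Qed.

Lemma delta2_shoot s k : delta2 (shoot s) (S k) = F (S k) (shoot s (S k)).
Proof. unfold delta2; rewrite shoot_SS; cbn [pred]; ring. Qed.

Lemma continuity_shoot n :
  (forall k, (1 <= k < n)%nat -> continuity (F k)) ->
  forall k, (k <= n)%nat -> continuity (fun s => shoot s k).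
Proof.
  intros HF.
  assert (Hpair : forall k, (S k <= n)%nat ->
            continuity (fun s => shoot s k) /\ continuity (fun s => shoot s (S k))).
  { induction k as [|k IH]; intros Hk.
    - split; [apply continuity_const; intros ? ?; reflexivity|].
      exact (derivable_continuous id derivable_id).
    - destruct IH as [IH0 IH1]; [lia|]. split; [exact IH1|].
      change (continuity (fun s => 2 * shoot s (S k) - shoot s k + F (S k) (shoot s (S k)))).
      apply continuity_plus; [apply continuity_minus; [|exact IH0]|].
      + exact (continuity_scal _ 2 IH1).
      + intros s. apply (continuity_pt_comp (fun s => shoot s (S k)) (F (S k))).
        * apply IH1.
        * apply HF; lia. }
  intros [|k] Hk; [apply continuity_const; intros ? ?; reflexivity|].
  apply Hpair; exact Hk.
Qed.

End Shooting.

Lemma grid_in_unit N k : (1 <= N)%nat -> (k <= N)%nat -> 0 <= INR k / INR N <= 1.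
Proof.
  intros HN Hk. assert (HNpos : 0 < INR N) by (apply lt_0_INR; lia).
  split.
  - apply Rmult_le_pos; [apply pos_INR | left; apply Rinv_0_lt_compat, HNpos].
  - apply Rmult_le_reg_r with (INR N); [exact HNpos|].
    unfold Rdiv; rewrite Rmult_assoc, Rinv_l, Rmult_1_r, Rmult_1_l by lra.
    apply le_INR, Hk.
Qed.

Lemma delta2_sub_linear x c k :
  (1 <= k)%nat -> delta2 (fun j => x j - INR j * c) k = delta2 x k.
Proof.
  intros Hk. destruct k as [|k]; [lia|].
  unfold delta2; cbn [pred]. rewrite !S_INR. ring.
Qed.

Section DirichletProblem.
Variables (N : nat) (F : nat -> R -> R).
Hypothesis HN : (1 <= N)%nat.

Definition solves_eq (x : nat -> R) : Prop :=
  forall k, (1 <= k <= N - 1)%nat -> delta2 x k = F k (x k).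

Variable mu : R.
Hypothesis Hmu : -1 < mu.
Hypothesis HF_mono : forall k a b, (1 <= k <= N - 1)%nat ->
  mu * (a - b) ^ 2 <= INR N ^ 2 * ((F k a - F k b) * (a - b)).

Lemma solves_eq_unique x y :
  solves_eq x -> solves_eq y -> x 0%nat = y 0%nat -> x N = y N ->
  forall k, (k <= N)%nat -> x k = y k.
Proof.
  intros Hx Hy H0 HN0 k Hk.
  set (A := Rmax (- mu) 0).
  assert (HA : 0 <= A < 1) by (split; [apply Rmax_r | apply Rmax_lub_lt; lra]).
  assert (Hw : (1 - A) * Rabs (x k - y k) <= 0).
  { apply (dirichlet_abs_bound N (fun j => x j - y j) A 0 HN); try lra; [| exact Hk].
    intros j Hj.
    replace (delta2 (fun j => x j - y j) j) with (F j (x j) - F j (y j))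
      by (rewrite <- Hx, <- Hy by exact Hj; unfold delta2; ring).
    pose proof (HF_mono j (x j) (y j) Hj). assert (- mu <= A) by apply Rmax_l.
    pose proof (pow2_ge_0 (x j - y j)). nra. }
  pose proof (Rle_abs (x k - y k)) as Hxy. pose proof (Rle_abs (y k - x k)) as Hyx.
  rewrite Rabs_minus_sym in Hyx. nra.
Qed.

Variables A K : R.
Hypothesis HA : 0 <= A < 1.
Hypothesis HK : 0 <= K.
Hypothesis HF_growth : forall k y, (1 <= k <= N - 1)%nat ->
  INR N ^ 2 * Rabs (F k y) <= A * Rabs y + K.

(* The estimate is applied to x minus its linear interpolation, which vanishes at 0 and N. *)
Lemma solves_eq_first_step_bound x :
  x 0%nat = 0 -> solves_eq x -> (1 - A) * Rabs (x 1%nat) <= Rabs (x N) + K.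
Proof.
  intros H0 Hx.
  assert (HNpos : 0 < INR N) by (apply lt_0_INR; lia).
  set (b := x N). set (z := fun k => x k - INR k * (b / INR N)).
  assert (Hz : (1 - A) * Rabs (z 1%nat) <= A * Rabs b + K).
  { apply (dirichlet_abs_bound N z A (A * Rabs b + K) HN); try lia.
    - unfold z; rewrite H0; simpl; ring.
    - unfold z, b; field; lra.
    - exact HA.
    - pose proof (Rabs_pos b); nra.
    - intros k Hk.
      change (delta2 z k) with (delta2 (fun j => x j - INR j * (b / INR N)) k).
      rewrite delta2_sub_linear, Hx by lia.
      assert (Hxz : Rabs (x k) <= Rabs (z k) + Rabs b).
      { replace (x k) with (z k + INR k / INR N * b) by (unfold z; field; lra).
        pose proof (grid_in_unit N k HN ltac:(lia)).
        eapply Rle_trans; [apply Rabs_triang|].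
        rewrite Rabs_mult, (Rabs_pos_eq (INR k / INR N)) by lra.
        pose proof (Rabs_pos b). nra. }
      pose proof (Rle_abs (- (F k (x k) * z k))) as HFz.
      rewrite Rabs_Ropp, Rabs_mult in HFz.
      pose proof (Rabs_pos (z k)). pose proof (pow2_ge_0 (INR N)).
      assert (INR N ^ 2 * Rabs (F k (x k)) * Rabs (z k) <= (A * Rabs (x k) + K) * Rabs (z k))
        by (apply Rmult_le_compat_r; [lra | apply HF_growth, Hk]).
      assert (A * Rabs (x k) * Rabs (z k) <= A * (Rabs (z k) + Rabs b) * Rabs (z k))
        by (apply Rmult_le_compat_r; [lra | apply Rmult_le_compat_l; lra]).
      assert (INR N ^ 2 * - (F k (x k) * z k) <= INR N ^ 2 * (Rabs (F k (x k)) * Rabs (z k)))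
        by (apply Rmult_le_compat_l; lra).
      rewrite <- (pow2_abs (z k)). lra. }
  assert (Hx1 : x 1%nat = z 1%nat + b / INR N) by (unfold z; simpl; ring).
  assert (Hb : Rabs (b / INR N) <= Rabs b).
  { assert (1 <= INR N) by (apply (le_INR 1); exact HN).
    unfold Rdiv; rewrite Rabs_mult, Rabs_inv, (Rabs_pos_eq (INR N)) by lra.
    apply Rmult_le_reg_r with (INR N); [lra|].
    rewrite Rmult_assoc, Rinv_l, Rmult_1_r by lra.
    pose proof (Rabs_pos b). nra. }
  rewrite Hx1. pose proof (Rabs_triang (z 1%nat) (b / INR N)). nra.
Qed.

Hypothesis HF_cont : forall k, (1 <= k <= N - 1)%nat -> continuity (F k).

Lemma solves_eq_exists : exists x, x 0%nat = 0 /\ x N = 0 /\ solves_eq x.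
Proof.
  assert (Hshoot : forall s, solves_eq (shoot F s)).
  { intros s [|k] Hk; [lia | apply delta2_shoot]. }
  destruct (continuity_injective_root (fun s => shoot F s N) (1 - A) K) as [s Hs].
  - apply (continuity_shoot F N); [intros k Hk; apply HF_cont; lia | lia].
  - intros a b Hab. rewrite <- (shoot_1 F a), <- (shoot_1 F b).
    apply solves_eq_unique; auto; lia.
  - lra.
  - intros s. rewrite <- (shoot_1 F s) at 1.
    apply solves_eq_first_step_bound; [reflexivity | apply Hshoot].
  - exists (shoot F s); auto.
Qed.

End DirichletProblem.

Lemma mvt_sub_mul_ge (g g' : R -> R) m :
  (forall y, derivable_pt_lim g y (g' y)) -> (forall y, m <= g' y) ->
  forall a b, m * (a - b) ^ 2 <= (g a - g b) * (a - b).
Proof.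
  intros Hg Hm.
  set (h := fun y => g y - m * y).
  assert (Hh : forall y, derivable_pt_lim h y (g' y - m)).
  { intros y. pose proof (derivable_pt_lim_scal id m y 1 (derivable_pt_lim_id y)) as Hlin.
    rewrite Rmult_1_r in Hlin. exact (derivable_pt_lim_minus _ _ y _ _ (Hg y) Hlin). }
  assert (Hh_incr : increasing h).
  { apply (nonneg_derivative_1 h (fun y => exist _ _ (Hh y))); intros y.
    rewrite (derive_pt_eq_0 _ _ _ _ (Hh y)). specialize (Hm y). lra. }
  intros a b. destruct (Rle_dec a b) as [Hab|Hab].
  - pose proof (Hh_incr a b Hab). unfold h in *. nra.
  - pose proof (Hh_incr b a ltac:(lra)). unfold h in *. nra.
Qed.

Lemma Rabs_bounded_upto (g : nat -> R) n :
  exists M, forall k, (k <= n)%nat -> Rabs (g k) <= M.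
Proof.
  induction n as [|n [M HM]].
  - exists (Rabs (g 0%nat)). intros k Hk. replace k with 0%nat by lia. lra.
  - exists (Rmax M (Rabs (g (S n)))). intros k Hk.
    destruct (Nat.eq_dec k (S n)) as [->|Hne]; [apply Rmax_r|].
    eapply Rle_trans; [apply HM; lia | apply Rmax_l].
Qed.

Definition grid_rhs (N : nat) (f : R -> R -> R) (v : R -> R) (k : nat) (y : R) : R :=
  / INR N ^ 2 * f (INR k / INR N) y + / INR N ^ 2 * v (INR k / INR N).

Section GridRhs.
Variables (N : nat) (f fx : R -> R -> R) (v : R -> R).
Hypothesis HN : (1 <= N)%nat.
Hypothesis Hderiv : forall t x, 0 <= t <= 1 -> derivable_pt_lim (fun y => f t y) x (fx t x).

Lemma grid_rhs_continuous k : (k <= N)%nat -> continuity (grid_rhs N f v k).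
Proof.
  intros Hk. pose proof (grid_in_unit N k HN Hk) as Ht.
  apply continuity_plus.
  - apply continuity_scal, derivable_continuous.
    intros y. exists (fx (INR k / INR N) y). apply Hderiv, Ht.
  - apply continuity_const; intros ? ?; reflexivity.
Qed.

Lemma grid_rhs_mono m k a b :
  (forall t x, 0 <= t <= 1 -> m <= fx t x) -> (k <= N)%nat ->
  m * (a - b) ^ 2 <= INR N ^ 2 * ((grid_rhs N f v k a - grid_rhs N f v k b) * (a - b)).
Proof.
  intros Hm Hk. pose proof (grid_in_unit N k HN Hk) as Ht.
  assert (HNpos : 0 < INR N) by (apply lt_0_INR; lia).
  replace (INR N ^ 2 * ((grid_rhs N f v k a - grid_rhs N f v k b) * (a - b)))
    with ((f (INR k / INR N) a - f (INR k / INR N) b) * (a - b))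
    by (unfold grid_rhs; field; lra).
  apply (mvt_sub_mul_ge (f (INR k / INR N)) (fx (INR k / INR N))); intros y.
  - apply Hderiv, Ht.
  - apply Hm, Ht.
Qed.

Lemma grid_rhs_growth A B V k y :
  (forall t x, 0 <= t <= 1 -> Rabs (f t x) <= A * Rabs x + B) ->
  Rabs (v (INR k / INR N)) <= V -> (k <= N)%nat ->
  INR N ^ 2 * Rabs (grid_rhs N f v k y) <= A * Rabs y + (B + V).
Proof.
  intros Hf Hv Hk. pose proof (grid_in_unit N k HN Hk) as Ht.
  assert (HNpos : 0 < INR N) by (apply lt_0_INR; lia).
  replace (INR N ^ 2 * Rabs (grid_rhs N f v k y))
    with (Rabs (f (INR k / INR N) y + v (INR k / INR N))).
  - pose proof (Rabs_triang (f (INR k / INR N) y) (v (INR k / INR N))).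
    pose proof (Hf _ y Ht). lra.
  - unfold grid_rhs. rewrite <- Rmult_plus_distr_l, Rabs_mult, Rabs_inv.
    rewrite (Rabs_pos_eq (INR N ^ 2)) by nra. field. lra.
Qed.

End GridRhs.

Theorem theorem5 (N : nat) (f : R -> R -> R) (v : R -> R) :
  (2 <= N)%nat ->
  (* v continuous on [0,1] *)
  (forall t, 0 <= t <= 1 -> forall eps, 0 < eps -> exists delta, 0 < delta /\
     forall s, 0 <= s <= 1 -> Rabs (s - t) < delta -> Rabs (v s - v t) < eps) ->
  (* (C(c)) *)
  cont_on_strip f ->
  forall fx : R -> R -> R,
  (forall t x, 0 <= t <= 1 -> derivable_pt_lim (fun y => f t y) x (fx t x)) ->
  cont_on_strip fx ->
  (* (D(f)) *)
  (exists A B, 0 < A /\ A < 1 /\ 0 < B /\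
     forall t x, 0 <= t <= 1 -> Rabs (f t x) <= A * Rabs x + B) ->
  (* (D(f_x)): inf f_x > -1, i.e. some lower bound m > -1 *)
  (exists m, -1 < m /\ forall t x, 0 <= t <= 1 -> m <= fx t x) ->
  (exists x : nat -> R, is_solution N f v x) /\
  (forall x y : nat -> R, is_solution N f v x -> is_solution N f v y ->
     forall k, (k <= N)%nat -> x k = y k).
Proof.
  intros HN _ _ fx Hderiv _ [A [B [HA [HA1 [HB Hf]]]]] [m [Hm Hfx]].
  assert (HN1 : (1 <= N)%nat) by lia.
  destruct (Rabs_bounded_upto (fun k => v (INR k / INR N)) N) as [V HV].
  assert (HV0 : 0 <= V) by (eapply Rle_trans; [apply Rabs_pos | apply (HV 0%nat); lia]).
  pose proof (fun k a b (Hk : (1 <= k <= N - 1)%nat) =>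
    grid_rhs_mono N f fx v HN1 Hderiv m k a b Hfx ltac:(lia)) as Hmono.
  split.
  - apply (solves_eq_exists N (grid_rhs N f v) HN1 m Hm Hmono A (B + V)); [split; lra | lra | |].
    + intros k y Hk. apply grid_rhs_growth; [exact HN1 | exact Hf | apply HV; lia | lia].
    + intros k Hk. apply (grid_rhs_continuous N f fx v HN1 Hderiv); lia.
  - intros x y (Hx0 & HxN & Hx) (Hy0 & HyN & Hy).
    apply (solves_eq_unique N (grid_rhs N f v) HN1 m Hm Hmono); auto; congruence.
Qed.
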